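(* Let $\mathcal{A},\mathcal{B}$ be Hilbert spaces with $\dim\mathcal{A}=\dim\mathcal{B}=d$, let $|\phi\rangle\in\mathcal{A}\otimes\mathcal{B}$ be an entangled pure state, and let $\rho=\frac{1}{d^2-1}(I_{\mathcal{A}\otimes\mathcal{B}}-|\phi\rangle\langle\phi|)$. Then $\{|\phi\rangle\langle\phi|,\rho\}$ is indistinguishable by PPT operations in the many copy scenario.
   Context: A bipartite positive semidefinite operator $E$ is PPT if its partial transpose $E^{T_B}$ (defined by $(|i\rangle\langle k|\otimes|j\rangle\langle l|)^{T_B}=|i\rangle\langle k|\otimes|l\rangle\langle j|$) is positive semidefinite. A set of orthogonal states $\{\rho_1,\dots,\rho_n\}$ on $\mathcal{A}\otimes\mathcal{B}$ is unambiguously distinguishable by PPT operations if there exist PPT operators $M_1,\dots,M_n$ with $\sum_k M_k=I$ and $\operatorname{tr}(M_i\rho_j)=p_i\delta_{ij}$, $p_i>0$ for all $i,j$; otherwise it is indistinguishable by PPT operations. It is indistinguishable by PPT operations in the many copy scenario if for every positive integer $m$, $\{\rho_1^{\otimes m},\dots,\rho_n^{\otimes m}\}$, regarded as bipartite states with respect to $\mathcal{A}^{\otimes m}:\mathcal{B}^{\otimes m}$, is indistinguishable by PPT operations. *)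

From mathcomp Require Import all_boot all_order all_algebra.
From mathcomp Require Export complex.
Set Implicit Arguments. Unset Strict Implicit. Unset Printing Implicit Defensive.
Import Order.TTheory GRing.Theory Num.Theory.
Local Open Scope ring_scope.

(* Operators on the finite-dimensional Hilbert space C^T (T a finite index
   set, orthonormal basis |t>), given by their matrix entries <x|E|y>. *)
Definition op (C : Type) (T : finType) := T -> T -> C.

Section Ops.
Variable C : numClosedFieldType.

Definition psd (T : finType) (E : op C T) : Prop :=
  forall v : T -> C, 0 <= \sum_(x : T) \sum_(y : T) (v x)^* * E x y * v y.

Definition idop (T : finType) : op C T := fun x y => (x == y)%:R.

Definition trace_prod (T : finType) (M E : op C T) : C :=
  \sum_(x : T) \sum_(y : T) M x y * E y x.

(* partial transpose on the B factor of A (x) B, index (a,b):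
   (|i><k| (x) |j><l|)^{T_B} = |i><k| (x) |l><j| *)
Definition ptB (TA TB : finType) (E : op C (TA * TB)%type) : op C (TA * TB)%type :=
  fun x y => E (x.1, y.2) (y.1, x.2).

Definition PPT (TA TB : finType) (E : op C (TA * TB)%type) : Prop :=
  psd E /\ psd (ptB E).

Definition PPT_unamb_dist (TA TB : finType) (n : nat)
  (rho : 'I_n -> op C (TA * TB)%type) : Prop :=
  exists (M : 'I_n -> op C (TA * TB)%type) (p : 'I_n -> C),
    (forall i, PPT (M i)) /\
    (forall x y, \sum_(i < n) M i x y = idop x y) /\
    (forall i, 0 < p i) /\
    (forall i j, trace_prod (M i) (rho j) = if i == j then p i else 0).

(* m-fold tensor power of a bipartite operator on A (x) B, regarded as a
   bipartite operator on A^{(x)m} : B^{(x)m}; a basis vector of A^{(x)m} is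
   a function 'I_m -> TA, similarly for B. *)
Definition tpow (TA TB : finType) (m : nat) (E : op C (TA * TB)%type) :
  op C ({ffun 'I_m -> TA} * {ffun 'I_m -> TB})%type :=
  fun x y => \prod_(k < m) E (x.1 k, x.2 k) (y.1 k, y.2 k).

Definition PPT_indist_many_copy (TA TB : finType) (n : nat)
  (rho : 'I_n -> op C (TA * TB)%type) : Prop :=
  forall m : nat, (0 < m)%N -> ~ PPT_unamb_dist (fun i => @tpow TA TB m (rho i)).

Definition normalized (T : finType) (v : T -> C) : Prop :=
  \sum_(x : T) (v x)^* * v x = 1.

Definition product_vec (TA TB : finType) (v : (TA * TB)%type -> C) : Prop :=
  exists (a : TA -> C) (b : TB -> C), forall i j, v (i, j) = a i * b j.

Definition entangled_pure (TA TB : finType) (v : (TA * TB)%type -> C) : Prop :=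
  normalized v /\ ~ product_vec v.

Definition proj (T : finType) (v : T -> C) : op C T :=
  fun x y => v x * (v y)^*.

End Ops.
Arguments idop {C T} x y.
Arguments tpow {C TA TB} m E x y.

From mathcomp Require Import all_boot all_order all_algebra.
From mathcomp Require Import complex.
From mathcomp Require Import ring.
Import Order.TTheory GRing.Theory Num.Theory.
Local Open Scope ring_scope.

(* Let M_0 be the PPT element that detects phi^(m).  It annihilates rho^(m),
   so its partial transpose N = M_0^(T_B), which is positive, annihilates
   ((I - |phi><phi|)^(T_B))^(m).  For a unit vector phi, 2 (I - |phi><phi|)^(T_B)
   is a sum of rank-one terms v_j v_j^* built from 2x2 "wedges" of the
   coefficient matrix of phi, and when phi is entangled the v_j span the
   whole space.  Then the m-fold tensor products of the v_j span the m-copy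
   space and all lie in the kernel of the positive operator N; hence N = 0,
   so M_0 = 0 and tr (M_0 phi^(m)) cannot be positive. *)

Set Implicit Arguments. Unset Strict Implicit.

Section Forms.
Context {C : numClosedFieldType}.

Lemma sum_delta_l (T : finType) (F : T -> C) a : \sum_i (i == a)%:R * F i = F a.
Proof.
rewrite (bigD1 a) //= eqxx mul1r big1 ?addr0 // => i /negbTE->; exact: mul0r.
Qed.

Lemma sum_delta_r (T : finType) (F : T -> C) a : \sum_i F i * (i == a)%:R = F a.
Proof. by rewrite -[RHS](sum_delta_l F); apply: eq_bigr => i _; rewrite mulrC. Qed.

Lemma sum_pair (TA TB : finType) (F : (TA * TB)%type -> C) :
  \sum_p F p = \sum_a \sum_b F (a, b).
Proof. by rewrite pair_bigA; apply: eq_bigr => -[]. Qed.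

Definition form (T : finType) (E : op C T) (u v : T -> C) : C :=
  \sum_x \sum_y (u x)^* * E x y * v y.

Lemma form_lincomb (T : finType) (E : op C T) u v a b :
  form E (fun x => a * u x + b * v x) (fun x => a * u x + b * v x) =
  a^* * a * form E u u + a^* * b * form E u v +
  b^* * a * form E v u + b^* * b * form E v v.
Proof.
rewrite /form !mulr_sumr -!big_split /=; apply: eq_bigr => x _.
rewrite !mulr_sumr -!big_split /=; apply: eq_bigr => y _.
rewrite rmorphD !rmorphM /=; ring.
Qed.

Lemma psd_form_ge0 (T : finType) (E : op C T) v : psd E -> 0 <= form E v v.
Proof. by move/(_ v). Qed.

(* Polarization: the cross terms of [form E (u + b v)] are real for [b = 1] and [b = 'i]. *)
Lemma psd_form_conj (T : finType) (E : op C T) u v :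
  psd E -> (form E u v)^* = form E v u.
Proof.
move=> psdE; set x := form E u v; set y := form E v u.
have cross_real b : b^* * b \is Num.real -> b * x + b^* * y \is Num.real.
  move=> bb_real; have := form_lincomb E u v 1 b.
  rewrite rmorph1 !mul1r mulr1 -/x -/y => expand.
  have -> : b * x + b^* * y =
      form E (fun z => 1 * u z + b * v z) (fun z => 1 * u z + b * v z)
      - form E u u - b^* * b * form E v v by rewrite expand; ring.
  by rewrite !rpredB ?(rpredM bb_real) ?ger0_real ?psd_form_ge0.
have e1 : (x + y)^* = x + y.
  apply: conj_Creal; have := cross_real 1; rewrite rmorph1 !mul1r; apply; exact: real1.
have e2 : ('i * x - 'i * y)^* = 'i * x - 'i * y.
  apply: conj_Creal; have := cross_real 'i.
  rewrite conjCi mulNr -expr2 sqrCi opprK mulNr; apply; exact: real1.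
rewrite rmorphD in e1; rewrite rmorphB !rmorphM /= conjCi in e2.
have two_neq0 : (2%:R : C) != 0 by rewrite pnatr_eq0.
apply: (mulfI two_neq0); apply: (mulfI (neq0Ci C)).
have -> : 'i * (2%:R * x^*) = 'i * (x^* + y^*) - (- 'i * x^* - - 'i * y^*) by ring.
by rewrite e1 e2; ring.
Qed.

(* With [z = E w] of squared norm [n], the form at [(Q + 1) w - n z] equals
   [- n ^+ 2 * (Q + 2)], where [Q = form E z z >= 0]. *)
Lemma psd_form_eq0 (T : finType) (E : op C T) w :
  psd E -> form E w w = 0 -> forall x, \sum_y E x y * w y = 0.
Proof.
move=> psdE Ew0.
pose z x := \sum_y E x y * w y.
pose n := \sum_x (z x)^* * z x.
have n_ge0 : 0 <= n by apply: sumr_ge0 => x _; rewrite mulrC mul_conjC_ge0.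
have n_conj : n^* = n := conj_Creal (ger0_real n_ge0).
have Ezw : form E z w = n.
  by apply: eq_bigr => x _; rewrite /z mulr_sumr; apply: eq_bigr => y _; rewrite mulrA.
have Ewz : form E w z = n by rewrite -psd_form_conj // Ezw n_conj.
set Q := form E z z.
have Q_ge0 : 0 <= Q := psd_form_ge0 z psdE.
have Q1_conj : (Q + 1)^* = Q + 1 by apply/conj_Creal/ger0_real; rewrite addr_ge0.
have Nn_conj : (- n)^* = - n by apply/conj_Creal; rewrite rpredN ger0_real.
have := psd_form_ge0 (fun x => (Q + 1) * w x + (- n) * z x) psdE.
rewrite form_lincomb Ew0 Ewz Ezw -/Q Q1_conj Nn_conj.
have -> : (Q + 1) * (Q + 1) * 0 + (Q + 1) * - n * n + - n * (Q + 1) * n + - n * - n * Q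
    = - (n ^+ 2 * (Q + 2%:R)) by ring.
rewrite oppr_ge0 pmulr_lle0 ?ltr_wpDl // => n2_le0.
have : n ^+ 2 == 0 by rewrite eq_le n2_le0 exprn_ge0.
rewrite expf_eq0 /= => /eqP/psumr_eq0P z0 x.
apply/eqP; rewrite -mul_conjC_eq0 mulrC; apply/eqP; apply: z0 => // y _.
by rewrite mulrC mul_conjC_ge0.
Qed.

End Forms.

Section Trace.
Context {C : numClosedFieldType}.

Definition gram (J T : finType) (v : J -> T -> C) : op C T :=
  fun x y => \sum_j v j x * (v j y)^*.

Definition spanning (J T : finType) (v : J -> T -> C) : Prop :=
  exists alpha : T -> J -> C, forall t s, (t == s)%:R = \sum_j alpha t j * v j s.

Lemma trace_prod_gram (J T : finType) (N : op C T) (v : J -> T -> C) :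
  trace_prod N (gram v) = \sum_j form N (v j) (v j).
Proof.
rewrite [RHS]exchange_big; apply: eq_bigr => x _.
rewrite [RHS]exchange_big; apply: eq_bigr => y _.
by rewrite mulr_sumr; apply: eq_bigr => j _; ring.
Qed.

Lemma psd_trace_gram_eq0 (J T : finType) (N : op C T) (v : J -> T -> C) :
  psd N -> spanning v -> trace_prod N (gram v) = 0 -> forall x y, N x y = 0.
Proof.
move=> psdN [alpha span]; rewrite trace_prod_gram => tr0 x t.
have Nv j : \sum_y N x y * v j y = 0.
  apply: (psd_form_eq0 psdN); apply: (psumr_eq0P _ tr0) => // i _.
  exact: psd_form_ge0.
rewrite -[LHS](sum_delta_r (N x) t).
under eq_bigr do rewrite eq_sym span mulr_sumr.
rewrite exchange_big big1 // => j _.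
transitivity (alpha t j * \sum_y N x y * v j y); last by rewrite Nv mulr0.
by rewrite mulr_sumr; apply: eq_bigr => y _; ring.
Qed.

Lemma trace_prodZ (T : finType) (N Y : op C T) c :
  trace_prod N (fun x y => c * Y x y) = c * trace_prod N Y.
Proof.
rewrite /trace_prod mulr_sumr; apply: eq_bigr => x _.
by rewrite mulr_sumr; apply: eq_bigr => y _; ring.
Qed.

Lemma eq_trace_prod (T : finType) (N Y Y' : op C T) :
  Y =2 Y' -> trace_prod N Y = trace_prod N Y'.
Proof. by move=> eqY; apply: eq_bigr => x _; apply: eq_bigr => y _; rewrite eqY. Qed.

Lemma trace_prod_ptB (TA TB : finType) (M X : op C (TA * TB)%type) :
  trace_prod M X = trace_prod (ptB M) (ptB X).
Proof.
rewrite /trace_prod /ptB !pair_big /=.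
pose h (p : (TA * TB) * (TA * TB)) := ((p.1.1, p.2.2), (p.2.1, p.1.2)).
have hK : involutive h by move=> [[a b] [a' b']].
by rewrite (reindex_inj (inv_inj hK)); apply: eq_bigr => -[[a b] [a' b']].
Qed.

End Trace.

Definition tvec {C : numClosedFieldType} {J TA TB : finType} (m : nat)
    (v : J -> (TA * TB)%type -> C) :
    {ffun 'I_m -> J} -> ({ffun 'I_m -> TA} * {ffun 'I_m -> TB})%type -> C :=
  fun f x => \prod_(k < m) v (f k) (x.1 k, x.2 k).
Arguments tvec {C J TA TB} m v.

Section TensorPower.
Context {C : numClosedFieldType}.

Lemma tpowZ {TA TB : finType} {m : nat} {E : op C (TA * TB)%type} {c : C} :
  tpow m (fun s t => c * E s t) =2 fun x y => c ^+ m * tpow m E x y.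
Proof. by move=> x y; rewrite /tpow big_split /= prodr_const card_ord. Qed.

Lemma eq_tpow (TA TB : finType) m (E E' : op C (TA * TB)%type) :
  E =2 E' -> tpow m E =2 tpow m E'.
Proof. by move=> eqE x y; apply: eq_bigr => k _; rewrite eqE. Qed.

Lemma ptB_tpow (TA TB : finType) m (E : op C (TA * TB)%type) :
  ptB (tpow m E) = tpow m (ptB E).
Proof. by []. Qed.

Lemma tpow_idop (TA TB : finType) m x y :
  tpow m (@idop C (TA * TB)%type) x y = idop x y.
Proof.
rewrite /tpow /idop; have [<-|neq_xy] := eqVneq x y.
  by rewrite big1 // => k _; rewrite eqxx.
have : ~~ [forall k, (x.1 k, x.2 k) == (y.1 k, y.2 k)].
  apply: contra neq_xy => /forallP eq_xy; case: x y eq_xy => [x1 x2] [y1 y2] /= eq_xy.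
  by apply/eqP; congr pair; apply/ffunP => k; have /eqP[] := eq_xy k.
by case/forallPn => k /negbTE neq_k; rewrite (bigD1 k) //= neq_k mul0r.
Qed.

Lemma tpow_gram {J TA TB : finType} {m : nat} {v : J -> (TA * TB)%type -> C} :
  tpow m (gram v) =2 gram (tvec m v).
Proof.
move=> x y; rewrite /tpow /gram bigA_distr_bigA /=; apply: eq_bigr => f _.
by rewrite /tvec rmorph_prod -big_split.
Qed.

Lemma spanning_tvec (J TA TB : finType) m (v : J -> (TA * TB)%type -> C) :
  spanning v -> spanning (tvec m v).
Proof.
case=> alpha span.
exists (fun (t : {ffun 'I_m -> TA} * {ffun 'I_m -> TB}) (f : {ffun 'I_m -> J}) =>
  \prod_k alpha (t.1 k, t.2 k) (f k)) => t s.
rewrite -[LHS]/(idop t s) -tpow_idop /tpow /idop; under eq_bigr do rewrite span.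
by rewrite bigA_distr_bigA; apply: eq_bigr => f _; rewrite -big_split.
Qed.

End TensorPower.

Section Wedge.
Context {C : numClosedFieldType}.
Variable T : finType.

Definition wedge (c : T -> C) (i j s : T) : C :=
  c i * (j == s)%:R - c j * (i == s)%:R.

Lemma sum_wedge (c c' : T -> C) s t :
  \sum_i \sum_j wedge c i j s * (wedge c' i j t)^* =
  2%:R * ((s == t)%:R * \sum_k c k * (c' k)^* - c t * (c' s)^*).
Proof.
have inner i : \sum_j wedge c i j s * (wedge c' i j t)^* =
    (s == t)%:R * (c i * (c' i)^*) - (c' s)^* * ((i == t)%:R * c i)
    - c t * ((i == s)%:R * (c' i)^*) + (\sum_k c k * (c' k)^*) * ((i == s)%:R * (i == t)%:R).
  rewrite (eq_bigr (fun j => c i * (c' i)^* * ((j == s)%:R * (j == t)%:R)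
      - c i * (i == t)%:R * ((j == s)%:R * (c' j)^*)
      - (c' i)^* * (i == s)%:R * ((j == t)%:R * c j)
      + (i == s)%:R * (i == t)%:R * (c j * (c' j)^*))); last first.
    by move=> j _; rewrite /wedge rmorphB !rmorphM /= !conjC_nat; ring.
  by rewrite !(sumrB, big_split) /= -!mulr_sumr !sum_delta_l; ring.
under eq_bigr do rewrite inner.
by rewrite !(sumrB, big_split) /= -!mulr_sumr !sum_delta_l; ring.
Qed.

Lemma wedge_span (c c' : T -> C) a0 i0 a s :
  c a0 != 0 -> c a0 * c' i0 - c i0 * c' a0 != 0 ->
  (a == s)%:R = (c a0)^-1 * (wedge c a0 a s
    + c a * (c' a0 * wedge c a0 i0 s - c a0 * wedge c' a0 i0 s)
      / (c a0 * c' i0 - c i0 * c' a0)).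
Proof.
by move=> ca0_neq0 minor_neq0; rewrite /wedge; field; rewrite ca0_neq0 minor_neq0.
Qed.

End Wedge.

Section Frame.
Context {C : numClosedFieldType}.
Variables (TA TB : finType) (phi : (TA * TB)%type -> C).

(* With rho_A the reduced state of phi on A, the first family sums to
   2 (I - rho_A) (x) I and the second to 2 (rho_A (x) I - |phi><phi|^(T_B)). *)
Definition frame (j : (TB * TB * TA * TA) + (TB * TB)) (s : (TA * TB)%type) : C :=
  match j with
  | inl (b, be, i, i') => wedge (fun k => (phi (k, b))^*) i i' s.1 * (be == s.2)%:R
  | inr (b, b') => wedge (fun k => phi (s.1, k)) b b' s.2
  end.

Lemma gram_frame : normalized phi ->
  gram frame =2 fun s t => 2%:R * ptB (fun x y => idop x y - proj phi x y) s t.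
Proof.
move=> nphi [s1 s2] [t1 t2].
pose c b k := (phi (k, b))^*.
have norm1 : \sum_b \sum_k c b k * (c b k)^* = 1.
  by rewrite exchange_big -nphi sum_pair; under eq_bigr do under eq_bigr do rewrite conjCK.
have tensor_delta b be : \sum_i \sum_i'
      wedge (c b) i i' s1 * (be == s2)%:R * (wedge (c b) i i' t1 * (be == t2)%:R)^* =
    (be == s2)%:R * ((be == t2)%:R *
      \sum_i \sum_i' wedge (c b) i i' s1 * (wedge (c b) i i' t1)^*).
  rewrite !mulr_sumr; apply: eq_bigr => i _; rewrite !mulr_sumr; apply: eq_bigr => i' _.
  by rewrite rmorphM /= conjC_nat; ring.
rewrite /gram big_sumType /= !sum_pair /= sum_wedge.
under eq_bigr => b _ do under eq_bigr => be _ do rewrite tensor_delta sum_wedge.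
under eq_bigr => b _ do rewrite sum_delta_l.
rewrite (eq_bigr (fun b => 2%:R * (s2 == t2)%:R * (s1 == t1)%:R * \sum_k c b k * (c b k)^*
    - 2%:R * (s2 == t2)%:R * (phi (s1, b) * (phi (t1, b))^*))); last first.
  by move=> b _; rewrite /c conjCK; ring.
rewrite sumrB -!mulr_sumr norm1 /ptB /idop /proj /= xpair_eqE -mulnb natrM [t2 == s2]eq_sym.
ring.
Qed.

Lemma entangled_minor : entangled_pure phi -> exists a0 b0 i0 j0,
  phi (a0, b0) != 0 /\ phi (a0, b0) * phi (i0, j0) - phi (i0, b0) * phi (a0, j0) != 0.
Proof.
case=> nphi not_product.
have [[a0 b0] phi_neq0] : exists x, phi x != 0.
  apply/existsP; apply: contraT => /existsPn phi0; move: nphi.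
  rewrite /normalized big1 => [/eqP|x _]; first by rewrite eq_sym oner_eq0.
  by rewrite (eqP (negPn (phi0 x))) mulr0.
have [/forallP rank1|/forallPn [i0 /forallPn [j0 minor]]] :=
  boolP [forall i, forall j, phi (a0, b0) * phi (i, j) == phi (i, b0) * phi (a0, j)].
  exfalso; apply: not_product.
  exists (fun i => phi (i, b0) / phi (a0, b0)), (fun j => phi (a0, j)) => i j.
  apply: (mulfI phi_neq0); rewrite (eqP (forallP (rank1 i) j)).
  by field.
by exists a0, b0, i0, j0; rewrite subr_eq0.
Qed.

Lemma entangled_card : entangled_pure phi -> (1 < #|TA|)%N.
Proof.
move=> /entangled_minor [a0 [b0 [i0 [j0 [_ minor]]]]].
apply/card_gt1P; exists a0, i0; split => //.
by apply: contraNneq minor => <-; rewrite subrr.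
Qed.

Lemma spanning_frame : entangled_pure phi -> spanning frame.
Proof.
move=> /entangled_minor [a0 [b0 [i0 [j0 [phi_neq0 minor]]]]].
pose c k := (phi (k, b0))^*; pose c' k := (phi (k, j0))^*.
pose D := c a0 * c' i0 - c i0 * c' a0.
have c_neq0 : c a0 != 0 by rewrite conjC_eq0.
have D_neq0 : D != 0 by rewrite /D /c /c' -!rmorphM -rmorphB conjC_eq0.
exists (fun t j => let: (a, be) := t in
  (c a0)^-1 * (j == inl (b0, be, a0, a))%:R
  + (c a0)^-1 * c a * c' a0 / D * (j == inl (b0, be, a0, i0))%:R
  - (c a0)^-1 * c a * c a0 / D * (j == inl (j0, be, a0, i0))%:R).
move=> [a be] [s1 s2].
under eq_bigr do rewrite !mulrBl mulrDl -!mulrA.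
rewrite !(sumrB, big_split) /= -!mulr_sumr !sum_delta_l /=.
rewrite xpair_eqE -mulnb natrM (wedge_span a s1 c_neq0 D_neq0) /D /c /c'.
ring.
Qed.

End Frame.

Local Open Scope complex_scope.

Theorem theorem2 (R : rcfType) (d : nat)
  (phi : ('I_d * 'I_d)%type -> R[i]) :
  entangled_pure phi ->
  let rho : op R[i] ('I_d * 'I_d)%type :=
    fun x y => ((d ^ 2 - 1)%:R)^-1 * (idop x y - proj phi x y) in
  PPT_indist_many_copy
    (fun k : 'I_2 => if k == ord0 then proj phi else rho).
Proof.
move=> ent rho m _ [M [p [PPT_M [_ [p_gt0 trM]]]]].
set X := fun x y => idop x y - proj phi x y.
have d_gt1 : (1 < d)%N by rewrite -[d]card_ord; exact: entangled_card ent.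
have kappa_neq0 : ((d ^ 2 - 1)%:R)^-1 != 0 :> R[i].
  by rewrite invr_eq0 pnatr_eq0 subn_eq0 -ltnNge -(exp1n 2) ltn_exp2r.
have trX : trace_prod (M ord0) (tpow m X) = 0.
  have := trM ord0 ord_max; rewrite /= (eq_trace_prod _ tpowZ) trace_prodZ.
  by move/eqP; rewrite mulf_eq0 expf_eq0 (negbTE kappa_neq0) andbF => /eqP.
have trY : trace_prod (ptB (M ord0)) (gram (tvec m (frame phi))) = 0.
  rewrite -(eq_trace_prod _ tpow_gram).
  rewrite (eq_trace_prod _ (eq_tpow (gram_frame (proj1 ent)))).
  by rewrite (eq_trace_prod _ tpowZ) trace_prodZ -ptB_tpow -trace_prod_ptB trX mulr0.
have ptM0 := psd_trace_gram_eq0 (proj2 (PPT_M ord0))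
  (spanning_tvec m (spanning_frame ent)) trY.
have := p_gt0 ord0; have := trM ord0 ord0; rewrite eqxx => <-.
rewrite /trace_prod big1 ?ltxx // => -[x1 x2] _; rewrite big1 // => -[y1 y2] _.
by have := ptM0 (x1, y2) (y1, x2); rewrite /ptB /= => ->; rewrite mul0r.
Qed.
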